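(* Let $n=5$, fix pairwise distinct $i,j,k\in\{1,2,3\}$, and let $\boldsymbol{D}$ satisfy conditions (i)–(x) of the scheme (with offsets chosen according to (A1)–(A8) and satisfying all separability conditions except the two exempted collisions). If receiver $\mathrm{Rx}_i$ sends the decoded message $W_{ij}$ to $\mathrm{Rx}_j$ over the receiver backhaul, so that $\mathrm{Rx}_j$ cancels $W_{ij}$ from the aligned sum $W_{ij}+W_{jk}$ and decodes $W_{jk}$, and then $\mathrm{Rx}_j$ sends $W_{jk}$ to $\mathrm{Rx}_k$, so that $\mathrm{Rx}_k$ cancels it from the aligned sum $W_{jk}+W_{ki}$ and decodes $W_{ki}$, then all $9$ messages are decoded by their intended receivers, i.e. $\frac{9}{5}$ degrees of freedom are achieved with receiver-backhaul sum-rate $\Theta_{\mathrm{R}}=2$. Moreover, with $n=5$, Cyclic Interference Alignment and Cancellation (all $9$ messages sent over the channel) cannot achieve $\frac{9}{5}$ degrees of freedom with $\Theta_{\mathrm{R}}\le 1$; hence $\Theta_{\mathrm{R}}\ge 2$ is necessary.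
   Context: Cyclic polynomial channel model of the $3$-user $X$-network. Fix $n\in\mathbb{N}$; all congruences are taken modulo $x^n-1$, so $x^a\equiv x^b$ iff $a\equiv b \pmod n$. Let $\mathcal{K}=\{1,2,3\}$. $\mathrm{Tx}_i$ holds one message $W_{ji}$ for each receiver $\mathrm{Rx}_j$, messages lying in an abelian group (binary strings of length $t$). $\mathrm{Tx}_i$ chooses offsets $p_{ji}\in\{0,\dots,n-1\}$ and transmits $u_i(x)\equiv\sum_jW_{ji}x^{p_{ji}}$. Channel matrix $\boldsymbol{D}=(d_{ji})$ of monomials $x^k$, known to all. $\mathrm{Rx}_j$ observes $r_j(x)\equiv\sum_i d_{ji}u_i(x)$; the coefficient at $x^m$ is the sum of messages arriving at offset $m$. At $\mathrm{Rx}_a$ dedicated signals are $d_{al}x^{p_{al}}$ and interfering signals are $d_{al}x^{p_{bl}}$, $b\ne a$. Separability conditions: (S1) for each $i$, $x^{p_{1i}},x^{p_{2i}},x^{p_{3i}}$ pairwise incongruent; (S2) dedicated signals at each receiver pairwise incongruent; (S3) every dedicated signal at $\mathrm{Rx}_a$ incongruent to every interfering signal at $\mathrm{Rx}_a$. A receiver decodes a message if it appears alone at some offset, possibly after subtracting messages it already knows. Degrees of freedom $=M/n$, $M$ the number of messages obtained by their intended receivers. Receiver backhaul network: interference-free links between receivers, each carrying one message-sized group element; $\Theta_{\mathrm{R}}$ is the total number of such elements exchanged. Alignment scheme for fixed pairwise distinct $i,j,k$: (A1) $d_{ii}x^{p_{ji}}\equiv d_{ij}x^{p_{kj}}\equiv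 d_{ik}x^{p_{jk}}$; (A2) $d_{ii}x^{p_{ki}}\equiv d_{ij}x^{p_{jj}}\equiv d_{ik}x^{p_{kk}}$; (A3) $d_{ji}x^{p_{ki}}\equiv d_{jj}x^{p_{kj}}\equiv d_{jk}x^{p_{ik}}$; (A4) $d_{ji}x^{p_{ii}}\equiv d_{jk}x^{p_{kk}}$; (A5) $d_{jj}x^{p_{ij}}\equiv d_{jk}x^{p_{jk}}$; (A6) $d_{ki}x^{p_{ii}}\equiv d_{kj}x^{p_{jj}}\equiv d_{kk}x^{p_{ik}}$; (A7) $d_{kj}x^{p_{ij}}\equiv d_{ki}x^{p_{ji}}$; (A8) $d_{ki}x^{p_{ki}}\equiv d_{kk}x^{p_{jk}}$. (A5) and (A8) are the two exempted collisions (dedicated $W_{jk}$ with interfering $W_{ij}$ at $\mathrm{Rx}_j$; dedicated $W_{ki}$ with interfering $W_{jk}$ at $\mathrm{Rx}_k$). Conditions on $\boldsymbol{D}$: (i) $d_{ij}d_{ki}d_{jk}\equiv d_{ji}d_{ik}d_{kj}$; (ii) $d_{ii}d_{jk}d_{kj}\equiv d_{jj}d_{ik}d_{ki}\equiv d_{kk}d_{ij}d_{ji}$; (iii) $d_{ii}d_{kk}\not\equiv d_{ik}d_{ki}$; (iv) $d_{ii}d_{jj}\not\equiv d_{ij}d_{ji}$; (v) $d_{ii}d_{jk}\not\equiv d_{ik}d_{ji}$; (vi) $d_{ij}d_{jk}\not\equiv d_{ik}d_{jj}$; (vii) $d_{kk}d_{ji}\not\equiv d_{ki}d_{jk}$;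 (viii) $d_{kk}d_{jj}\not\equiv d_{kj}d_{jk}$; (ix) $d_{ii}d_{jj}d_{kk}\not\equiv d_{ij}d_{jk}d_{ki}\equiv d_{ji}d_{kj}d_{ik}$; (x) $d_{kk}d_{ii}d_{jj}d_{kk}\not\equiv d_{jk}d_{kj}d_{ik}d_{ki}$, $d_{ii}d_{ii}d_{jj}d_{kk}\not\equiv d_{ij}d_{ji}d_{ik}d_{ki}$, $d_{jj}d_{ii}d_{jj}d_{kk}\not\equiv d_{ij}d_{ji}d_{jk}d_{kj}$. Under (i)–(x), offsets satisfying (A1)–(A8) and all separability conditions except the two exempted collisions exist. *)

From mathcomp Require Import all_boot.
Set Implicit Arguments. Unset Strict Implicit. Unset Printing Implicit Defensive.

(* Users {1,2,3} are represented by 'I_3 = {0,1,2}. *)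
Definition user := 'I_3.

(* The message W_{ji} (intended for Rx_j, held by Tx_i) is the pair (j, i). *)
Definition msg := (user * user)%type.

(* Channel matrix: d_{ji} = x^(e j i); it is a matrix of monomials, represented by
   the exponents.  Offsets: p j i is the offset p_{ji} of W_{ji} at Tx_i.
   All congruences are modulo x^n - 1, i.e. x^a == x^b  iff  a = b (mod n);
   products of monomials correspond to sums of exponents. *)

(* offset (exponent mod n) at which message W_{bl} arrives at receiver Rx_a:
   d_{al} x^{p_{bl}} *)
Definition arr (n : nat) (e p : user -> user -> nat) (a : user) (w : msg) : nat :=
  (e a w.2 + p w.1 w.2) %% n.

(* The inductive
   (least-fixed-point) definition is exactly iterated successive cancellation. *)
Inductive decodes (n : nat) (e p : user -> user -> nat) (a : user) (K : msg -> Prop)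
  : msg -> Prop :=
| dec_known w : K w -> decodes n e p a K w
| dec_alone w :
    (forall w', w' <> w -> arr n e p a w' = arr n e p a w -> decodes n e p a K w') ->
    decodes n e p a K w.

(* A receiver backhaul protocol: a list of transfers (src, dst, W), executed in order;
   each transfer carries one message-sized group element over an interference-free
   link from receiver src to receiver dst. *)
Definition transfer := (user * user * msg)%type.

Definition received (tr : seq transfer) (b : user) (w : msg) : Prop :=
  exists t, t \in tr /\ t.1.2 = b /\ t.2 = w.

Definition valid_backhaul (n : nat) (e p : user -> user -> nat) (tr : seq transfer) : Prop :=
  forall (s : nat) (t : transfer), s < size tr -> nth t tr s = t ->
    decodes n e p t.1.1 (received (take s tr) t.1.1) t.2.

Definition theta_R (tr : seq transfer) : nat := size tr.

(* all 9 messages obtained by their intended receivers (M = 9, i.e. DoF 9/n) *)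
Definition all_decoded (n : nat) (e p : user -> user -> nat) (tr : seq transfer) : Prop :=
  forall (j i : user), decodes n e p j (received tr j) (j, i).

Definition channel_conditions (n : nat) (e : user -> user -> nat) (i j k : user) : Prop :=
  e i j + e k i + e j k = e j i + e i k + e k j %[mod n] /\
      e i i + e j k + e k j = e j j + e i k + e k i %[mod n] /\
                 e j j + e i k + e k i = e k k + e i j + e j i %[mod n] /\
      e i i + e k k <> e i k + e k i %[mod n] /\
      e i i + e j j <> e i j + e j i %[mod n] /\
      e i i + e j k <> e i k + e j i %[mod n] /\
      e i j + e j k <> e i k + e j j %[mod n] /\
      e k k + e j i <> e k i + e j k %[mod n] /\
      e k k + e j j <> e k j + e j k %[mod n] /\
      e i i + e j j + e k k <> e i j + e j k + e k i %[mod n] /\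
                  e i j + e j k + e k i = e j i + e k j + e i k %[mod n] /\
      (e k k + e i i + e j j + e k k <> e j k + e k j + e i k + e k i %[mod n] /\
                      e i i + e i i + e j j + e k k <> e i j + e j i + e i k + e k i %[mod n] /\
                      e j j + e i i + e j j + e k k <> e i j + e j i + e j k + e k j %[mod n]).

Definition alignment (n : nat) (e p : user -> user -> nat) (i j k : user) : Prop :=
  e i i + p j i = e i j + p k j %[mod n] /\ e i j + p k j = e i k + p j k %[mod n] /\
      e i i + p k i = e i j + p j j %[mod n] /\ e i j + p j j = e i k + p k k %[mod n] /\
      e j i + p k i = e j j + p k j %[mod n] /\ e j j + p k j = e j k + p i k %[mod n] /\
      e j i + p i i = e j k + p k k %[mod n] /\
      e j j + p i j = e j k + p j k %[mod n] /\
      e k i + p i i = e k j + p j j %[mod n] /\ e k j + p j j = e k k + p i k %[mod n] /\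
      e k j + p i j = e k i + p j i %[mod n] /\
      e k i + p k i = e k k + p j k %[mod n].

(* The two exempted collisions: dedicated W_{jk} with interfering W_{ij} at Rx_j,
   and dedicated W_{ki} with interfering W_{jk} at Rx_k.  (a, l, b, l') stands for
   "dedicated W_{al} with interfering W_{bl'} at Rx_a". *)
Definition exempted (i j k : user) (a l b l' : user) : Prop :=
  (a = j /\ l = k /\ b = i /\ l' = j) \/ (a = k /\ l = i /\ b = j /\ l' = k).

Definition separable_except (n : nat) (e p : user -> user -> nat) (i j k : user) : Prop :=
  [/\ forall (l b b' : user), b <> b' -> p b l <> p b' l %[mod n],
      forall (a l l' : user), l <> l' ->
                   e a l + p a l <> e a l' + p a l' %[mod n] &
      forall (a l b l' : user), b <> a -> ~ exempted i j k a l b l' ->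
                   e a l + p a l <> e a l' + p b l' %[mod n]].

From mathcomp Require Import all_boot zify.

(* Decoding at a receiver only ever fails through a collision
   with another unknown message; under the separability conditions the only
   collisions are the two exempted ones, so a receiver decodes a dedicated
   message as soon as it knows the exempted partner of that message.  The
   transfers W_ij : Rx_i -> Rx_j and W_jk : Rx_j -> Rx_k supply exactly these
   partners (and Rx_i, resp. Rx_j, has decoded what it sends).  This holds
   for every n and uses only separability.

   With at most one transfer, two receivers A and B get
   nothing over the backhaul, so each must see every dedicated message alone
   at its offset ("clean" receiver).  Measuring, for each transmitter, the
   offsets of its messages relative to its message for A turns this into a
   statement about residues mod 5: relative offsets x, y shared by both
   receivers and one reference offset per receiver and transmitter.
   Cleanliness is invariant under the affine maps t |-> c t + s of Z/5
   (c a unit); after normalising by such a map the remaining finitely many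
   configurations are ruled out by exhaustive computation. *)

(* A decoded message that was not known beforehand shares its offset with no
   other unknown message: successive cancellation cannot break a collision
   between two unknown messages. *)
Lemma decoded_unknown_alone {n} {e p : user -> user -> nat} {a K w} :
  decodes n e p a K w -> ~ K w ->
  forall w', w' <> w -> ~ K w' -> arr n e p a w' <> arr n e p a w.
Proof.
elim=> {w} [w Kw|w _ IH] nKw //= w' ne nKw' heq.
exact: (IH w' ne heq nKw' w (fun E => ne (esym E)) nKw (esym heq)).
Qed.

Lemma exempted_dec (i j k a l b l' : user) :
  exempted i j k a l b l' \/ ~ exempted i j k a l b l'.
Proof.
case: (boolP ([&& a == j, l == k, b == i & l' == j] || [&& a == k, l == i, b == j & l' == k])).
  by case/orP => /and4P[/eqP ? /eqP ? /eqP ? /eqP ?]; subst; left; [left | right].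
move=> hnot; right=> -[[? [? [? ?]]] | [? [? [? ?]]]]; subst;
  by move: hnot; rewrite !eqxx ?orbT.
Qed.

Lemma decodes_of_separable n (e p : user -> user -> nat) (i j k a l : user)
    (K : msg -> Prop) :
  separable_except n e p i j k ->
  (forall b l', (b, l') <> (a, l) -> exempted i j k a l b l' -> K (b, l')) ->
  decodes n e p a K (a, l).
Proof.
case=> _ S2 S3 hK; apply: dec_alone => -[b l'] ne heq; apply: dec_known.
have [ex|nex] := exempted_dec i j k a l b l'; first exact: hK.
rewrite /arr /= in heq; case: (eqVneq b a) => [eq_ba|ne_ba].
  subst b; have ne_l : l <> l' by move=> E; apply: ne; rewrite E.
  by case: (S2 a l l' ne_l); rewrite heq.
by case: (S3 a l b l' (elimN eqP ne_ba) nex); rewrite heq.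
Qed.

Lemma two_transfers_decode_all n (e p : user -> user -> nat) (i j k : user) :
  i <> j -> j <> k -> i <> k -> separable_except n e p i j k ->
  let tr : seq transfer := [:: (i, j, (i, j)); (j, k, (j, k))] in
  [/\ valid_backhaul n e p tr, all_decoded n e p tr & theta_R tr = 2].
Proof.
move=> hij hjk hik hsep tr.
have got_ij : received tr j (i, j) by exists (i, j, (i, j)); rewrite inE eqxx.
have got_jk : received tr k (j, k) by exists (j, k, (j, k)); rewrite !inE eqxx orbT.
split=> //.
- (* Rx_i sends W_ij, which it decodes unaided; Rx_j then sends W_jk,
     whose only exempted partner W_ij it has just received. *)
  move=> [|[|s]] t //= _ <-; apply: decodes_of_separable hsep _.
    by move=> b l' _ [[E _] | [E _]]; [case: hij | case: hik].
  move=> b l' _ [[_ [_ [-> ->]]] | [E _]]; last by case: hjk.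
  by exists (i, j, (i, j)); rewrite inE eqxx.
- move=> a l; apply: decodes_of_separable hsep _.
  by move=> b l' _ [[-> [_ [-> ->]]] | [-> [_ [-> ->]]]].
Qed.

(* Fix three distinct users in roles 0, 1, 2 (role 0 is the reference user A).
   At a given receiver, g l is the offset of A's message from transmitter l,
   and x l, y l are the offsets of the role-1 and role-2 messages of
   transmitter l relative to A's; slot g x y r l is then the offset at which
   the role-r message of transmitter l arrives. *)

Definition slot (g x y : nat -> nat) (r l : nat) : nat :=
  (g l + nth 0 [:: 0; x l; y l] r) %% 5.

Definition clean (d : nat) (g x y : nat -> nat) : bool :=
  all (fun l => all (fun r => all (fun m =>
    ((r, m) != (d, l)) ==> (slot g x y r m != slot g x y d l))
    (iota 0 3)) (iota 0 3)) (iota 0 3).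

Lemma cleanP d g x y :
  reflect (forall l r m, l < 3 -> r < 3 -> m < 3 -> (r, m) <> (d, l) ->
             slot g x y r m <> slot g x y d l)
          (clean d g x y).
Proof.
apply: (iffP idP) => [hc l r m hl hr hm ne | hc].
  move: hc => /allP/(_ l); rewrite mem_iota => /(_ hl)/allP/(_ r).
  rewrite mem_iota => /(_ hr)/allP/(_ m); rewrite mem_iota => /(_ hm).
  by move/eqP: ne => -> /eqP.
apply/allP => l; rewrite mem_iota => /andP[_ hl]; apply/allP => r.
rewrite mem_iota => /andP[_ hr]; apply/allP => m; rewrite mem_iota => /andP[_ hm].
by apply/implyP => /eqP ne; apply/eqP; apply: hc.
Qed.

Definition affine (c s : nat) (f : nat -> nat) : nat -> nat :=
  fun l => (c * f l + s) %% 5.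

Lemma slot_affine c s g x y r l :
  slot (affine c s g) (affine c 0 x) (affine c 0 y) r l = (c * slot g x y r l + s) %% 5.
Proof.
rewrite /slot /affine.
have -> : nth 0 [:: 0; (c * x l + 0) %% 5; (c * y l + 0) %% 5] r =
          (c * nth 0 [:: 0; x l; y l] r + 0) %% 5.
  by case: r => [|[|[|r]]]; rewrite //= ?nth_nil muln0.
rewrite modnDm -[in RHS]modnDml modnMmr modnDml.
congr (_ %% 5); lia.
Qed.

Lemma affine_inj {c c' s a b : nat} : c' * c = 1 %[mod 5] ->
  c * a + s = c * b + s %[mod 5] -> a = b %[mod 5].
Proof.
move=> hc /eqP; rewrite eqn_modDr => /eqP hab.
have -> : a = c' * c * a %[mod 5] by rewrite -modnMml hc modnMml mul1n.
have -> : b = c' * c * b %[mod 5] by rewrite -modnMml hc modnMml mul1n.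
by rewrite -!mulnA -modnMmr hab modnMmr.
Qed.

Lemma clean_affine {c c'} s {d g x y} : c' * c = 1 %[mod 5] ->
  clean d g x y -> clean d (affine c s g) (affine c 0 x) (affine c 0 y).
Proof.
move=> hc /cleanP hcl; apply/cleanP => l r m hl hr hm ne.
by rewrite !slot_affine => /(affine_inj hc); rewrite !modn_mod; apply: hcl.
Qed.

Lemma fermat5 a : a %% 5 != 0 -> a ^ 4 = 1 %[mod 5].
Proof.
rewrite -modnXm; have : a %% 5 < 5 by rewrite ltn_mod.
by case: (a %% 5) => [|[|[|[|[|]]]]].
Qed.

(* Normalised configurations: all values are residues, the two receivers'
   reference offsets g 0, h 0 are 0 and the relative offset x 0 is 1.
   They are enumerated exhaustively. *)
Definition residues : seq nat := iota 0 5.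

Definition triples_from (a : nat) : seq (nat * nat * nat) :=
  [seq (a, b, c) | b <- residues, c <- residues].

Definition triples : seq (nat * nat * nat) := flatten [seq triples_from a | a <- residues].

Definition fn (t : nat * nat * nat) : nat -> nat := nth 0 [:: t.1.1; t.1.2; t.2].

Definition no_clean_pair_search : bool :=
  all (fun x => all (fun y =>
      ~~ (has (fun g => clean 0 (fn g) (fn x) (fn y)) (triples_from 0) &&
          has (fun h => clean 1 (fn h) (fn x) (fn y)) (triples_from 0)))
    triples) (triples_from 1).

Lemma no_clean_pair_searchT : no_clean_pair_search.
Proof. by vm_compute. Qed.

(* clean only inspects transmitters 0, 1, 2. *)
Lemma clean_fn d g x y :
  clean d g x y = clean d (fn (g 0, g 1, g 2)) (fn (x 0, x 1, x 2)) (fn (y 0, y 1, y 2)).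
Proof. by []. Qed.

Lemma triples_fromP a b c : b < 5 -> c < 5 -> (a, b, c) \in triples_from a.
Proof. by move=> hb hc; apply: allpairs_f; rewrite mem_iota. Qed.

Lemma triplesP a b c : a < 5 -> b < 5 -> c < 5 -> (a, b, c) \in triples.
Proof.
move=> ha hb hc; apply/flatten_mapP; exists a; first by rewrite mem_iota.
exact: triples_fromP.
Qed.

Lemma normalised_no_clean_pair g h x y :
  (forall l, [/\ g l < 5, h l < 5, x l < 5 & y l < 5]) ->
  x 0 = 1 -> g 0 = 0 -> h 0 = 0 -> ~~ (clean 0 g x y && clean 1 h x y).
Proof.
move=> bnd x0 g0 h0.
have [g1 h1 x1 y1] := bnd 1; have [g2 h2 x2 y2] := bnd 2; have [_ _ _ y0] := bnd 0.
rewrite (clean_fn 0) (clean_fn 1) g0 h0 x0.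
have /allP/(_ (1, x 1, x 2)) := no_clean_pair_searchT.
rewrite triples_fromP // => /(_ isT) /allP/(_ (y 0, y 1, y 2)).
rewrite triplesP // => /(_ isT) /negP hnot; apply/negP => /andP[cg ch]; apply: hnot.
by apply/andP; split; apply/hasP; [exists (0, g 1, g 2) | exists (0, h 1, h 2)];
  rewrite ?triples_fromP.
Qed.

(* Two receivers in roles 0 and 1 cannot both be clean: normalise by the
   affine map t |-> c (t - g 0) resp. c (t - h 0) with c = (x 0)^-1. *)
Lemma no_two_clean_receivers g h x y : clean 0 g x y -> clean 1 h x y -> False.
Proof.
move=> cg ch.
(* W_B0 and W_A0 do not collide at the clean receiver A, so x 0 is a unit *)
have x0 : x 0 %% 5 != 0.
  apply/negP => /eqP x0; move/cleanP: cg => /(_ 0 1 0 isT isT isT) []//.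
  by rewrite /slot /= -modnDmr x0.
pose c := x 0 ^ 3.
have hc : x 0 * c = 1 %[mod 5] by rewrite -expnS fermat5.
have : ~~ (clean 0 (affine c (4 * (c * g 0)) g) (affine c 0 x) (affine c 0 y) &&
           clean 1 (affine c (4 * (c * h 0)) h) (affine c 0 x) (affine c 0 y)).
  apply: normalised_no_clean_pair; rewrite /affine.
  - by move=> l; rewrite !ltn_mod.
  - by rewrite addn0 mulnC hc.
  - lia.
  - lia.
by rewrite (clean_affine _ hc cg) (clean_affine _ hc ch).
Qed.

Section Reduction.
Variables (e p : user -> user -> nat) (A B C : user).
Hypotheses (hAB : A <> B) (hAC : A <> C) (hBC : B <> C).

Definition tx (m : nat) : user := inord m.
Definition role (r : nat) : user := nth A [:: A; B; C] r.

(* offset at receiver R of A's message from transmitter m, and the offset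
   of U's message from transmitter m relative to A's (4 = -1 mod 5) *)
Definition ref_offset (R : user) (m : nat) : nat := e R (tx m) + p A (tx m).
Definition rel_offset (U : user) (m : nat) : nat := p U (tx m) + 4 * p A (tx m).

Lemma arr_slot R r m :
  arr 5 e p R (role r, tx m) = slot (ref_offset R) (rel_offset B) (rel_offset C) r m.
Proof.
rewrite /arr /slot /ref_offset /rel_offset /role /=.
by case: r => [|[|[|r]]]; rewrite /= ?nth_nil; lia.
Qed.

Lemma role_inj {r d : nat} : r < 3 -> d < 3 -> role r = role d -> r = d.
Proof.
by rewrite /role; case: r => [|[|[|]]] //; case: d => [|[|[|]]] //= _ _ E; congruence.
Qed.

Lemma tx_inj {m l : nat} : m < 3 -> l < 3 -> tx m = tx l -> m = l.
Proof. by move=> hm hl /(congr1 val); rewrite /= !inordK. Qed.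

Lemma silent_receiver_clean d (K : msg -> Prop) :
  d < 3 -> (forall w, ~ K w) -> (forall l, decodes 5 e p (role d) K (role d, l)) ->
  clean d (ref_offset (role d)) (rel_offset B) (rel_offset C).
Proof.
move=> hd nK hdec; apply/cleanP => l r m hl hr hm ne; rewrite -!arr_slot.
have ne' : (role r, tx m) <> (role d, tx l).
  by case=> /(role_inj hr hd) er /(tx_inj hm hl) em; apply: ne; rewrite er em.
exact: (decoded_unknown_alone (hdec (tx l)) (nK _) _ ne' (nK _)).
Qed.

End Reduction.

Lemma one_destination (tr : seq transfer) :
  theta_R tr <= 1 -> exists C : user, forall t, t \in tr -> t.1.2 = C.
Proof.
case: tr => [|t [|]] // _; first by exists ord0.
by exists t.1.2 => s; rewrite inE => /eqP ->.
Qed.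

Lemma other_users (C : user) : exists A B : user, [/\ A <> B, A <> C & B <> C].
Proof.
have hC := ltn_ord C; exists (inord (C.+1 %% 3)), (inord (C.+2 %% 3)).
by split=> /(congr1 val) /=; rewrite ?inordK ?ltn_mod //; lia.
Qed.

Lemma silent_receivers (tr : seq transfer) : theta_R tr <= 1 ->
  exists A B C : user, [/\ A <> B, A <> C, B <> C,
    (forall w, ~ received tr A w) & (forall w, ~ received tr B w)].
Proof.
move=> /one_destination [C dest]; have [A [B [hAB hAC hBC]]] := other_users C.
exists A, B, C; split=> // w [t [/dest -> [E _]]]; [exact: hAC | exact: hBC].
Qed.

Lemma one_transfer_insufficient (e p : user -> user -> nat) (tr : seq transfer) :
  theta_R tr <= 1 -> ~ all_decoded 5 e p tr.
Proof.
move=> /silent_receivers [A [B [C [hAB hAC hBC sA sB]]]] hall.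
apply: (@no_two_clean_receivers (ref_offset e p A A) (ref_offset e p A B)
                                 (rel_offset p A B) (rel_offset p A C)).
- exact: (silent_receiver_clean e p _ _ _ hAB hAC hBC 0 _ isT sA (hall A)).
- exact: (silent_receiver_clean e p _ _ _ hAB hAC hBC 1 _ isT sB (hall B)).
Qed.

Theorem lemma1 :
  (forall (e p : user -> user -> nat) (i j k : user),
      i <> j -> j <> k -> i <> k ->
      channel_conditions 5 e i j k ->
      (forall b l : user, p b l < 5) ->
      alignment 5 e p i j k ->
      separable_except 5 e p i j k ->
      let tr : seq transfer := [:: (i, j, (i, j)); (j, k, (j, k))] in
      [/\ valid_backhaul 5 e p tr, all_decoded 5 e p tr & theta_R tr = 2])
  /\
  (forall (e p : user -> user -> nat) (tr : seq transfer),
      (forall b l : user, p b l < 5) ->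
      valid_backhaul 5 e p tr -> theta_R tr <= 1 -> ~ all_decoded 5 e p tr).
Proof.
split.
- move=> e p i j k hij hjk hik _ _ _ hsep.
  exact: two_transfers_decode_all.
- move=> e p tr _ _.
  exact: one_transfer_insufficient.
Qed.
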